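(* In the setting below, let $\tilde h\in L_2(s)$ and define $h^*(\theta)=\tilde h(t(\theta))$ for $\theta\in\Theta$. Then $h^*\in L_2(\nu)$ and $\tilde\Delta(\tilde h)=\Delta(h^* )$.
   Context: $(\mathcal{X},\mathcal{B})$ and $(\Theta,\mathcal{C})$ are Polish spaces with Borel $\sigma$-algebras; $P(\cdot\mid\theta)$ is a Markov kernel; $\nu$ is a $\sigma$-finite measure on $\Theta$; the marginal $M(B)=\int P(B\mid\theta)\nu(d\theta)$ is $\sigma$-finite; $Q(d\theta\mid x)$ is a Markov kernel with $P(dx\mid\theta)\nu(d\theta)=Q(d\theta\mid x)M(dx)$. The transition $R(C\mid\eta)=\int_{\mathcal{X}}Q(C\mid x)P(dx\mid\eta)$ defines the Dirichlet form $\Delta(h)=\frac12\int\int (h(\theta)-h(\eta))^2R(d\theta\mid\eta)\nu(d\eta)$ for $h\in L_2(\nu)$. Let $t:\Theta\to[0,\infty)$ be measurable and $s(A)=\nu(t^{-1}(A))$ on Borel sets of $[0,\infty)$. Assume there are disjoint Borel sets $A_i$, $i\ge1$, covering $[0,\infty)$ with $0<\nu(t^{-1}(A_i))<\infty$. Let $\pi(d\theta\mid a)$ be a Markov kernel with $\int f_2(t(\theta))f_1(\theta)\nu(d\theta)=\int_0^\infty f_2(a)\int f_1(\theta)\pi(d\theta\mid a)\,s(da)$ for all nonnegative measurable $f_1,f_2$. Set $\tilde P(dx\mid a)=\int P(dx\mid\theta)\pi(d\theta\mid a)$; its marginal under $s$ is $M$, and $\tilde Q(da\mid x)$ is a Markov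 kernel with $\tilde P(dx\mid a)s(da)=\tilde Q(da\mid x)M(dx)$. Let $\tilde R(da\mid b)=\int\tilde Q(da\mid x)\tilde P(dx\mid b)$ and $\tilde\Delta(\tilde h)=\frac12\int_0^\infty\int_0^\infty(\tilde h(a)-\tilde h(b))^2\tilde R(da\mid b)s(db)$. *)

From HB Require Import structures.
From mathcomp Require Import all_boot all_order all_algebra.
From mathcomp Require Import all_classical all_reals all_analysis measurable_realfun.
Set Implicit Arguments. Unset Strict Implicit. Unset Printing Implicit Defensive.
Import Order.TTheory GRing.Theory Num.Theory.
Local Open Scope classical_set_scope.
Local Open Scope ring_scope.

Definition L2fun d (T : measurableType d) (R : realType) (D : set T)
  (mu : {measure set T -> \bar R}) (f : T -> R) : Prop :=
  measurable_fun D f /\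
  (\int[mu]_(x in D) ((f x) ^+ 2)%:E < +oo)%E.

Definition dirichlet_form d (T : measurableType d) (R : realType)
  (D : set T) (mu : {measure set T -> \bar R})
  (K : T -> {measure set T -> \bar R}) (h : T -> R) : \bar R :=
  ((2^-1)%:E * \int[mu]_(eta in D) \int[K eta]_(th in D)
      ((h th - h eta) ^+ 2)%:E)%E.

From HB Require Import structures.
From mathcomp Require Import all_boot all_order all_algebra.
From mathcomp Require Import all_classical all_reals all_analysis measurable_realfun.
Set Implicit Arguments. Unset Strict Implicit. Unset Printing Implicit Defensive.
Import Order.TTheory GRing.Theory Num.Theory numFieldTopology.Exports.
Local Open Scope classical_set_scope.
Local Open Scope ring_scope.
Local Open Scope ereal_scope.

(* Both Dirichlet forms integrate a squared difference against a two-step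
   transition started from its reversible measure.  The inversion relations
   P(dx|th) nu(dth) = Q(dth|x) M(dx) and Pt(dx|a) s(da) = Qt(da|x) M(dx) turn
   each of them into an integral over M(dx) against the square of the
   backward kernel, Q(.|x) (x) Q(.|x) resp. Qt(.|x) (x) Qt(.|x).
   Disintegrating nu along t shows that, for each Borel A, the functions
   x |-> Qt(A|x) and x |-> Q(t^-1 A|x) have the same integral over every set,
   hence agree M-a.e.; taking for A the rational rays, a countable pi-system
   generating the Borel sets, Qt(.|x) is the image of Q(.|x) under t for
   M-almost every x, and the two integrals coincide.  Square integrability of
   ht o t holds because s is the image of nu under t. *)

Section measure_kernel_product.
Context d1 d2 (Y : measurableType d1) (X : measurableType d2) (R : realType).
Variables (mu : {measure set Y -> \bar R}) (k : R.-fker Y ~> X).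

Definition mkprod (E : set (Y * X)) := \int[mu]_y k y (xsection E y).

Let mkprod0 : mkprod set0 = 0.
Proof. by apply: integral0_eq => y _; rewrite xsection0 measure0. Qed.

Let mkprod_ge0 E : 0 <= mkprod E.
Proof. exact: integral_ge0. Qed.

Let mkprod_sigma_additive : semi_sigma_additive mkprod.
Proof.
move=> F mF tF mU.
have mkF n : measurable_fun [set: Y] (fun y => k y (xsection (F n) y)).
  by apply: measurable_fun_xsection_finite_kernel; rewrite inE.
suff -> : mkprod (\bigcup_n F n) = \sum_(0 <= i <oo) mkprod (F i).
  exact: is_cvg_nneseries.
rewrite /mkprod -integral_nneseries//; apply: eq_integral => y _.
rewrite xsection_bigcup measure_semi_bigcup//.
- by move=> i; exact: measurable_xsection.
- exact: trivIset_xsection.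
- by rewrite -xsection_bigcup; exact: measurable_xsection.
Qed.

HB.instance Definition _ := isMeasure.Build _ _ _
  mkprod mkprod0 mkprod_ge0 mkprod_sigma_additive.

Lemma mkprodX A B : measurable A -> measurable B ->
  mkprod (A `*` B) = \int[mu]_(y in A) k y B.
Proof.
move=> mA mB; rewrite [RHS]integral_mkcond; apply: eq_integral => y _.
rewrite patchE; case: ifPn => yA; first by rewrite in_xsectionX.
by rewrite notin_xsectionX// measure0.
Qed.

End measure_kernel_product.

Section integral_mkprod.
Context d1 d2 (Y : measurableType d1) (X : measurableType d2) (R : realType).
Variables (mu : {measure set Y -> \bar R}) (k : R.-fker Y ~> X).
Import HBNNSimple.

Let measurable_fun_integral_section (f : Y * X -> \bar R) :
  measurable_fun [set: Y * X] f -> (forall z, 0 <= f z) ->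
  measurable_fun [set: Y] (fun y => \int[k y]_x f (y, x)).
Proof. by move=> mf f0; exact: measurable_fun_integral_finite_kernel. Qed.

Let integral_mkprod_indic E : measurable E ->
  \int[mkprod mu k]_z (\1_E z)%:E = \int[mu]_y \int[k y]_x (\1_E (y, x))%:E.
Proof.
move=> mE; rewrite integral_indic// setIT; apply: eq_integral => y _.
by have := kfcompkindic k mE => /(congr1 (fun f => f y)); rewrite /kfcomp => ->.
Qed.

Let integral_mkprod_scaled_indic r E : (0 <= r)%R -> measurable E ->
  \int[mkprod mu k]_z (r * \1_E z)%:E =
  \int[mu]_y \int[k y]_x (r * \1_E (y, x))%:E.
Proof.
move=> r0 mE.
have mEy y : measurable_fun [set: X] (fun x => (\1_E (y, x))%:E).
  by apply/measurable_EFinP/measurableT_comp => //; exact: measurable_pair1.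
under [LHS]eq_integral do rewrite EFinM.
rewrite ge0_integralZl//; last exact/measurable_EFinP/measurable_indic.
rewrite integral_mkprod_indic// -ge0_integralZl//; last 2 first.
- apply: (measurable_fun_integral_section (f := fun z => (\1_E z)%:E)) => //.
  exact/measurable_EFinP/measurable_indic.
- by move=> y _; apply: integral_ge0 => x _; rewrite lee_fin.
by apply: eq_integral => y _; rewrite -ge0_integralZl.
Qed.

Let integral_mkprod_nnsfun (f : {nnsfun (Y * X) >-> R}) :
  \int[mkprod mu k]_z (f z)%:E = \int[mu]_y \int[k y]_x (f (y, x))%:E.
Proof.
have mlevel r : measurable_fun [set: Y * X] (fun z => (r * \1_(f @^-1` [set r]) z)%:E).
  exact/measurable_EFinP/measurable_funM.
have level_ge0 r z : 0 <= (r * \1_(f @^-1` [set r]) z)%:E.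
  by rewrite EFinM nnfun_muleindic_ge0.
under [LHS]eq_integral do rewrite fimfunE -fsumEFin//.
rewrite ge0_integral_fsum//.
under [in RHS]eq_integral => y _.
  under eq_integral do rewrite fimfunE -fsumEFin//.
  rewrite ge0_integral_fsum//; last first.
    by move=> r; apply: measurableT_comp (mlevel r) _; exact: measurable_pair1.
  over.
rewrite ge0_integral_fsum//; last 2 first.
- by move=> r; exact: (measurable_fun_integral_section (mlevel r)).
- by move=> r y _; exact: integral_ge0.
apply: eq_fsbigr => r _; have [r0|r0] := leP 0%R r.
  exact: integral_mkprod_scaled_indic.
rewrite preimage_nnfun0//; transitivity (0 : \bar R).
  by apply: integral0_eq => z _; rewrite indic0 mulr0.
by apply/esym/integral0_eq => y _; apply: integral0_eq => x _; rewrite indic0 mulr0.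
Qed.

Lemma integral_mkprod f : (forall z, 0 <= f z) -> measurable_fun [set: Y * X] f ->
  \int[mkprod mu k]_z f z = \int[mu]_y \int[k y]_x f (y, x).
Proof.
move=> f0 mf; pose f_ := nnsfun_approx measurableT mf.
have f_cvg z : (f_ n z)%:E @[n --> \oo] --> f z by exact: cvg_nnsfun_approx.
have f_nd z : {homo (fun n => (f_ n z)%:E) : m n / (m <= n)%N >-> m <= n}.
  by move=> m n mn; rewrite lee_fin; exact/lefP/nd_nnsfun_approx.
have mf_ n : measurable_fun [set: Y * X] (fun z => (f_ n z)%:E).
  exact/measurable_EFinP.
have mf_y n y : measurable_fun [set: X] (fun x => (f_ n (y, x))%:E).
  by apply: measurableT_comp (mf_ n) _; exact: measurable_pair1.
transitivity (limn (fun n => \int[mkprod mu k]_z (f_ n z)%:E)).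
  rewrite -monotone_convergence//; last by move=> n z _; rewrite lee_fin.
  by apply: eq_integral => z _; apply/esym/cvg_lim.
under eq_fun do rewrite integral_mkprod_nnsfun.
rewrite -monotone_convergence//; last 3 first.
- by move=> n; apply: (measurable_fun_integral_section (mf_ n)) => z; rewrite lee_fin.
- by move=> n y _; apply: integral_ge0 => x _; rewrite lee_fin.
- move=> y _ m n mn; apply: ge0_le_integral => //.
  + by move=> x _; rewrite lee_fin.
  + by move=> x _; exact: f_nd.
apply: eq_integral => y _; rewrite -monotone_convergence//.
- by apply: eq_integral => x _; apply/cvg_lim.
- by move=> n x _; rewrite lee_fin.
Qed.

End integral_mkprod.

Lemma setI_closed_measurable_rectangles d1 d2
    (T1 : measurableType d1) (T2 : measurableType d2) :
  @setI_closed (T1 * T2) [set A `*` B | A in d1.-measurable & B in d2.-measurable].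
Proof.
move=> _ _ [A1 mA1 [A2 mA2 <-]] [B1 mB1 [B2 mB2 <-]].
exists (A1 `&` B1); first exact: measurableI.
by exists (A2 `&` B2); [exact: measurableI | rewrite setXI].
Qed.

Section integral_kernel_inversion.
Context d1 d2 (Y : measurableType d1) (X : measurableType d2) (R : realType).
Variables (mu : {measure set Y -> \bar R}) (k : R.-fker Y ~> X).
Variables (M : {measure set X -> \bar R}) (q : R.-fker X ~> Y).
Hypothesis mu_sigma_finite : sigma_finite [set: Y] mu.
Hypothesis kq : forall A B, measurable A -> measurable B ->
  \int[mu]_(y in A) k y B = \int[M]_(x in B) q x A.

Let mkprod_swap E : measurable E ->
  mkprod mu k E = mkprod M q (unstable.swap @^-1` E).
Proof.
have [F covF Ffin] := mu_sigma_finite.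
case: (measure_uub k) => r kr.
change (measurable E -> mkprod mu k E = pushforward (mkprod M q) unstable.swap E).
apply: (measure_unique [set A `*` B | A in d1.-measurable & B in d2.-measurable]
  (fun n => F n `*` setT)).
- exact: measurable_prod_measurableType.
- exact: setI_closed_measurable_rectangles.
- by move=> n; exists (F n); [exact: (Ffin n).1 | exists setT].
- by rewrite -setX_bigcupl -covF setXTT.
- exact: measurable_swap.
- move=> mswap _ [A mA [B mB <-]].
  change (mkprod mu k (A `*` B) = mkprod M q (unstable.swap @^-1` (A `*` B))).
  have -> : unstable.swap @^-1` (A `*` B) = B `*` A.
    by apply/seteqP; split => -[x y] [].
  by rewrite !mkprodX// kq.
- move=> n; have [mFn Fnfin] := Ffin n.
  change (mkprod mu k (F n `*` setT) < +oo); rewrite mkprodX//.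
  apply: (@le_lt_trans _ _ (\int[mu]_(y in F n) r%:E)).
    apply: ge0_le_integral => //; last by move=> y _; exact/ltW.
    exact/measurable_funTS/measurable_kernel.
  by rewrite integral_cst// ltey_eq fin_numM// ge0_fin_numE.
Qed.

Lemma integral_kernel_inversion g : (forall z, 0 <= g z) ->
  measurable_fun [set: Y * X] g ->
  \int[mu]_y \int[k y]_x g (y, x) = \int[M]_x \int[q x]_y g (y, x).
Proof.
move=> g0 mg.
have mgswap : measurable_fun [set: X * Y] (g \o unstable.swap).
  by apply: measurableT_comp => //; exact: measurable_swap.
rewrite -integral_mkprod// -[RHS](integral_mkprod M q (f := g \o unstable.swap))//.
  rewrite -[RHS](ge0_integral_pushforward (@measurable_swap _ _ X Y) _ measurableT mg)//.
  apply: eq_measure_integral => [|mswap A mA _]; first exact: measurable_swap.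
  exact: mkprod_swap.
by move=> z; exact: g0.
Qed.

End integral_kernel_inversion.

Lemma integral_kcomp_snd d0 d1 d2 (T0 : measurableType d0)
    (T1 : measurableType d1) (T2 : measurableType d2) (R : realType)
    (l : R.-sfker T0 ~> T1) (k : R.-spker T1 ~> T2) x
    (m : {measure set T2 -> \bar R}) :
  (forall C, measurable C -> m C = \int[l x]_y k y C) ->
  forall f, (forall z, 0 <= f z) -> measurable_fun [set: T2] f ->
  \int[m]_z f z = \int[l x]_y \int[k y]_z f z.
Proof.
move=> mE f f0 mf.
rewrite -(integral_kcomp l (@kernel.kernel_snd _ _ _ T0 T1 T2 R k))//.
by apply: eq_measure_integral => C mC _; rewrite mE.
Qed.

Lemma measurable_fun_integral_kernel_snd d0 d1 d2 (T0 : measurableType d0)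
    (T1 : measurableType d1) (T2 : measurableType d2) (R : realType)
    (k : R.-spker T1 ~> T2) (f : T0 * T2 -> \bar R) :
  (forall z, 0 <= f z) -> measurable_fun [set: T0 * T2] f ->
  measurable_fun [set: T0 * T1] (fun p => \int[k p.2]_z f (p.1, z)).
Proof.
move=> f0 mf.
apply: (measurable_fun_integral_finite_kernel
  (fun pz : (T0 * T1) * T2 => f (pz.1.1, pz.2)) (@kernel.kernel_snd _ _ _ T0 T1 T2 R k)) => //.
apply: measurableT_comp mf _; apply: measurable_fun_pair => //.
exact: measurableT_comp.
Qed.

Section integral_two_step_inversion.
Context d1 d2 (Y : measurableType d1) (X : measurableType d2) (R : realType).
Variables (mu : {measure set Y -> \bar R}) (k : R.-fker Y ~> X).
Variables (M : {measure set X -> \bar R}) (q : R.-spker X ~> Y).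
Variable K : Y -> {measure set Y -> \bar R}.
Hypothesis mu_sigma_finite : sigma_finite [set: Y] mu.
Hypothesis kq : forall A B, measurable A -> measurable B ->
  \int[mu]_(y in A) k y B = \int[M]_(x in B) q x A.
Hypothesis K_kcomp : forall y C, measurable C -> K y C = \int[k y]_x q x C.

Lemma integral_two_step_inversion G : (forall z, 0 <= G z) ->
  measurable_fun [set: Y * Y] G ->
  \int[mu]_eta \int[K eta]_th G (th, eta) =
  \int[M]_x \int[q x]_eta \int[q x]_th G (th, eta).
Proof.
move=> G0 mG.
have mGeta eta : measurable_fun [set: Y] (fun th => G (th, eta)).
  by apply: measurableT_comp mG _; exact: measurable_pair2.
transitivity (\int[mu]_eta \int[k eta]_x \int[q x]_th G (th, eta)).
  by apply: eq_integral => eta _; exact: (integral_kcomp_snd (K_kcomp eta)).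
apply: (integral_kernel_inversion mu_sigma_finite kq
  (g := fun p => \int[q p.2]_th G (th, p.1))).
- by move=> p; exact: integral_ge0.
- apply: (measurable_fun_integral_kernel_snd q (f := fun p => G (p.2, p.1))) => //.
  by apply: measurableT_comp mG _; exact: measurable_swap.
Qed.

Lemma dirichlet_form_inversion (h : Y -> R) : measurable_fun [set: Y] h ->
  dirichlet_form [set: Y] mu K h =
  (2^-1)%:E * \int[M]_x \int[q x]_eta \int[q x]_th ((h th - h eta) ^+ 2)%:E.
Proof.
move=> mh; rewrite /dirichlet_form.
rewrite (integral_two_step_inversion (G := fun p => ((h p.1 - h p.2) ^+ 2)%:E))//.
- by move=> p; rewrite lee_fin sqr_ge0.
- by apply/measurable_EFinP/measurable_funX/measurable_funB; exact: measurableT_comp.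
Qed.

End integral_two_step_inversion.

(* [setT] is included so that the generator contains a cover of finite measure. *)
Definition rat_rays (R : realType) : set (set R) :=
  [set A | A = setT \/ exists q : rat, A = `]ratr q, +oo[%classic].

Definition nth_rat (n : nat) : rat := odflt 0%R (unpickle n).

Lemma nth_rat_pickle q : nth_rat (pickle q) = q.
Proof. by rewrite /nth_rat pickleK. Qed.

Lemma itvoy_bigcup_rat (R : realType) (x : R) : `]x, +oo[%classic =
  \bigcup_n (if (x < ratr (nth_rat n))%R then `]ratr (nth_rat n), +oo[%classic else set0).
Proof.
apply/seteqP; split => [y|y [n _]].
  rewrite /= in_itv /= andbT => /rat_in_itvoo[q]; rewrite in_itv /= => /andP[xq qy].
  by exists (pickle q) => //; rewrite nth_rat_pickle xq /= in_itv /= qy.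
by case: ifPn => // xq; rewrite /= !in_itv /= !andbT; exact: lt_trans.
Qed.

Lemma measurable_rat_rays (R : realType) : @measurable _ R = <<s @rat_rays R >>.
Proof.
apply/seteqP; split; last first.
  apply: smallest_sub; first exact: sigma_algebra_measurable.
  by move=> A [->|[q ->]]; [exact: measurableT | exact: measurable_itv].
have ocitv_rays : <<s @ocitv R >> = <<s @RGenOInfty.G R >> := RGenOInfty.measurableE R.
move=> A mA; have : <<s @ocitv R >> A := mA.
rewrite ocitv_rays; move: A {mA}.
apply: smallest_sub; first exact: smallest_sigma_algebra.
move=> _ [x ->]; rewrite itvoy_bigcup_rat.
have [rays0 _ rays_bigcup] := smallest_sigma_algebra [set: R] (@rat_rays R).
apply: rays_bigcup => n; case: ifPn => _; last exact: rays0.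
by apply: sub_sigma_algebra; right; exists (nth_rat n).
Qed.

Lemma setI_closed_rat_rays (R : realType) : setI_closed (@rat_rays R).
Proof.
move=> A B [->|[p ->]] [->|[q ->]]; rewrite ?setTI ?setIT.
- by left.
- by right; exists q.
- by right; exists p.
right; exists (Num.max p q); apply/seteqP; split => y /=; rewrite !in_itv /= !andbT.
  by case=> py qy; rewrite maxr_rat gt_max py qy.
by rewrite maxr_rat gt_max => /andP[].
Qed.

Lemma ae_eq_of_setintegral_eq d (X : measurableType d) (R : realType)
    (M : {measure set X -> \bar R}) (f g : X -> \bar R) (r : R) :
  sigma_finite [set: X] M ->
  measurable_fun [set: X] f -> measurable_fun [set: X] g ->
  (forall x, `|f x| <= r%:E) ->
  (forall B, measurable B -> \int[M]_(x in B) f x = \int[M]_(x in B) g x) ->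
  {ae M, forall x, f x = g x}.
Proof.
move=> [F covF Ffin] mf mg fr fg.
have aeF n : {ae M, forall x, F n x -> f x = g x}.
  have [mFn Fnfin] := Ffin n.
  apply: (integral_ae_eq mFn); last 2 first.
  - exact: measurable_funTS.
  - by move=> E _ mE; exact: fg.
  apply/integrableP; split; first exact: measurable_funTS.
  apply: (@le_lt_trans _ _ (\int[M]_(x in F n) r%:E)).
    apply: ge0_le_integral => //.
    by apply: measurableT_comp => //; exact: measurable_funTS.
  by rewrite integral_cst// ltey_eq fin_numM// ge0_fin_numE.
apply: filterS (ae_foralln aeF) => x fgx.
have : (\bigcup_n F n) x by rewrite -covF.
by case=> n _ /fgx.
Qed.

Section ae_eq_kernel_image.
Context d d' (X : measurableType d) (T : measurableType d') (R : realType).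
Variables (M : {measure set X -> \bar R}) (q : R.-pker X ~> T).
Variables (p : R.-pker X ~> R) (t : T -> R).
Hypotheses (M_sigma_finite : sigma_finite [set: X] M).
Hypothesis (mt : measurable_fun [set: T] t).
Hypothesis pq : forall A B, measurable A -> measurable B ->
  \int[M]_(x in B) p x A = \int[M]_(x in B) q x (t @^-1` A).

Lemma ae_eq_kernel_image :
  {ae M, forall x A, measurable A -> p x A = q x (t @^-1` A)}.
Proof.
have mpre A : measurable A -> measurable (t @^-1` A).
  by move=> mA; rewrite -[X in measurable X]setTI; exact: mt.
have ae_ray n : {ae M, forall x,
    p x `]ratr (nth_rat n), +oo[%classic =
    q x (t @^-1` `]ratr (nth_rat n), +oo[%classic)}.
  apply: (@ae_eq_of_setintegral_eq _ _ _ M _ _ 1%R M_sigma_finite).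
  - exact: measurable_kernel.
  - exact/measurable_kernel/mpre.
  - move=> x; rewrite gee0_abs// -(@prob_kernel _ _ _ _ _ p x).
    by apply: le_measure; rewrite ?inE.
  - by move=> B mB; exact: pq.
apply: filterS (ae_foralln ae_ray) => x pq_rays A mA.
change (p x A = pushforward (q x) t A).
apply: (measure_unique (@rat_rays R) (fun=> setT) (measurable_rat_rays R)
  (@setI_closed_rat_rays R)) => //.
- by move=> _; left.
- by rewrite bigcup_const.
- move=> _ [->|[r ->]].
    by change (p x setT = q x (t @^-1` setT)); rewrite preimage_setT !prob_kernel.
  by rewrite -(nth_rat_pickle r); exact: pq_rays.
- by move=> _; rewrite prob_kernel ltry.
Qed.

End ae_eq_kernel_image.

Section conull.
Context d (T : measurableType d) (R : realType) (mu : {measure set T -> \bar R}).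
Variable D : set T.
Hypotheses (mD : measurable D) (mu_conull : mu (~` D) = 0).

Lemma ge0_integral_setI_conull A (f : T -> \bar R) : measurable A ->
  measurable_fun A f -> (forall x, A x -> 0 <= f x) ->
  \int[mu]_(x in A `&` D) f x = \int[mu]_(x in A) f x.
Proof.
move=> mA mf f0.
rewrite [RHS](ge0_negligible_integral (N := ~` D))// ?setDE ?setCK//.
exact: measurableC.
Qed.

Lemma ge0_integral_conull (f : T -> \bar R) : measurable_fun [set: T] f ->
  (forall x, 0 <= f x) -> \int[mu]_(x in D) f x = \int[mu]_x f x.
Proof. by move=> mf f0; rewrite -[in LHS](setTI D) ge0_integral_setI_conull. Qed.

Lemma sigma_finite_conull_cover (F : (set T)^nat) :
  \bigcup_n F n = D -> (forall n, measurable (F n) /\ mu (F n) < +oo) ->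
  sigma_finite [set: T] mu.
Proof.
move=> covF Ffin; exists (fun n => if n is n.+1 then F n else ~` D).
  apply/seteqP; split => // x _; have [Dx|NDx] := pselect (D x); last by exists 0%N.
  by move: Dx; rewrite -covF => -[n _ Fnx]; exists n.+1.
case=> [|n]; last exact: Ffin.
by rewrite mu_conull; split; [exact: measurableC|].
Qed.

Lemma L2fun_conull (h : T -> R) : L2fun D mu h -> L2fun [set: T] mu (h \_ D).
Proof.
case=> mh hfin; have mhD : measurable_fun [set: T] (h \_ D).
  exact/(measurable_restrictT _ mD).
split => //; rewrite -ge0_integral_conull//; last 2 first.
- exact/measurable_EFinP/measurable_funX.
- by move=> x; rewrite lee_fin sqr_ge0.
congr (_ < _): hfin; apply: eq_integral => x /[!inE] Dx.
by rewrite patchE mem_set.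
Qed.

End conull.

Lemma prob_kernel_setC_eq0 d d' (X : measurableType d) (Y : measurableType d')
    (R : realType) (k : R.-pker X ~> Y) x A :
  measurable A -> k x A = 1 -> k x (~` A) = 0.
Proof.
move=> mA kA.
have : k x setT = k x (setT `\` A) + k x (setT `&` A) := measureDI (k x) measurableT mA.
rewrite setTI setTD kA prob_kernel => /(congr1 (fun z => z - 1)).
by rewrite addeK// subee.
Qed.

Lemma kernel_inversion_conull d1 d2 (Y : measurableType d1) (X : measurableType d2)
    (R : realType) (mu : {measure set Y -> \bar R}) (k : R.-ker Y ~> X)
    (M : {measure set X -> \bar R}) (q : X -> {measure set Y -> \bar R}) (D : set Y) :
  measurable D -> mu (~` D) = 0 -> (forall x, q x (~` D) = 0) ->
  (forall A B, measurable A -> A `<=` D -> measurable B ->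
     \int[mu]_(y in A) k y B = \int[M]_(x in B) q x A) ->
  forall A B, measurable A -> measurable B ->
    \int[mu]_(y in A) k y B = \int[M]_(x in B) q x A.
Proof.
move=> mD mu_conull q_conull kq A B mA mB.
rewrite -(ge0_integral_setI_conull mD mu_conull)//; last first.
  exact/measurable_funTS/measurable_kernel.
rewrite kq//; last exact: measurableI.
apply: eq_integral => x _.
rewrite [RHS](measureDI (q x) mA mD).
rewrite [X in X + _](subset_measure0 _ _ _ (q_conull x)) ?add0e//.
- exact: measurableD.
- exact: measurableC.
Qed.

Lemma dirichlet_form_conull d (T : measurableType d) (R : realType)
    (mu : {measure set T -> \bar R}) (K : R.-fker T ~> T) (D : set T) (h : T -> R) :
  measurable D -> mu (~` D) = 0 -> (forall y, K y (~` D) = 0) -> measurable_fun D h ->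
  dirichlet_form D mu K h = dirichlet_form [set: T] mu K (h \_ D).
Proof.
move=> mD mu_conull K_conull mh; rewrite /dirichlet_form; congr (_ * _).
have mhD : measurable_fun [set: T] (h \_ D) by exact/(measurable_restrictT _ mD).
have mG : measurable_fun [set: T * T]
    (fun p => (((h \_ D) p.2 - (h \_ D) p.1) ^+ 2)%:E).
  apply/measurable_EFinP/measurable_funX/measurable_funB.
    exact: measurableT_comp.
  exact: measurableT_comp.
rewrite -(ge0_integral_conull mD mu_conull)//; last 2 first.
- apply: (measurable_fun_integral_finite_kernel _ K) mG => p.
  by rewrite lee_fin sqr_ge0.
- by move=> eta; apply: integral_ge0 => th _; rewrite lee_fin sqr_ge0.
apply: eq_integral => eta /[!inE] Deta.
rewrite -(ge0_integral_conull mD (K_conull eta))//; last 2 first.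
- exact/measurable_EFinP/measurable_funX/measurable_funB.
- by move=> th; rewrite lee_fin sqr_ge0.
by apply: eq_integral => th /[!inE] Dth; rewrite !patchE !mem_set.
Qed.

Section image_measure.
Context d d' (T : measurableType d) (T' : measurableType d') (R : realType).
Variables (q : {measure set T -> \bar R}) (m : {measure set T' -> \bar R}).
Variable t : T -> T'.
Hypotheses (mt : measurable_fun [set: T] t)
  (m_image : forall A, measurable A -> m A = q (t @^-1` A)).

Lemma ge0_integral_image h : measurable_fun [set: T'] h -> (forall y, 0 <= h y) ->
  \int[m]_y h y = \int[q]_x h (t x).
Proof.
move=> mh h0; rewrite -[RHS](ge0_integral_pushforward mt q measurableT mh)//.
by apply: eq_measure_integral => A mA _; rewrite m_image.
Qed.

Lemma image_measure_conull (D : set T') : measurable D -> (forall x, D (t x)) ->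
  m (~` D) = 0.
Proof.
move=> mD tD; rewrite m_image; last exact: measurableC.
suff -> : t @^-1` (~` D) = set0 by rewrite measure0.
by apply/seteqP; split => x //=; apply.
Qed.

Lemma L2fun_image (h : T' -> R) : L2fun [set: T'] m h -> L2fun [set: T] q (h \o t).
Proof.
case=> mh hfin; split; first exact: measurableT_comp.
rewrite -(ge0_integral_image (h := fun y => (h y ^+ 2)%:E))//.
- exact/measurable_EFinP/measurable_funX.
- by move=> y; rewrite lee_fin sqr_ge0.
Qed.

End image_measure.

Lemma setintegral_disintegration d d' (T : measurableType d) (T' : measurableType d')
    (R : realType) (nu : {measure set T -> \bar R}) (s : {measure set T' -> \bar R})
    (t : T -> T') (pi : R.-ker T' ~> T) (D : set T') :
  measurable D -> s (~` D) = 0 ->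
  (forall (f1 : T -> \bar R) (f2 : T' -> \bar R),
     (forall th, 0 <= f1 th) -> measurable_fun [set: T] f1 ->
     (forall a, 0 <= f2 a) -> measurable_fun [set: T'] f2 ->
     \int[nu]_th (f2 (t th) * f1 th) = \int[s]_(a in D) (f2 a * \int[pi a]_th f1 th)) ->
  forall A f, measurable A -> (forall th, 0 <= f th) -> measurable_fun [set: T] f ->
  \int[s]_(a in A) \int[pi a]_th f th = \int[nu]_(th in t @^-1` A) f th.
Proof.
move=> mD s_conull disintegration A f mA f0 mf.
have mpif : measurable_fun [set: T'] (fun a => \int[pi a]_th f th).
  exact: (measurable_fun_integral_kernel (measurable_kernel pi)).
have mA1 : measurable_fun [set: T'] (EFin \o \1_A : T' -> \bar R).
  by apply/measurable_EFinP; exact: measurable_indic.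
rewrite integral_mkcond [RHS]integral_mkcond !epatch_indic.
rewrite -(ge0_integral_conull mD s_conull); last 2 first.
- exact: emeasurable_funM.
- by move=> a; rewrite /= mule_ge0// ?integral_ge0// lee_fin.
transitivity (\int[s]_(a in D) ((EFin \o \1_A) a * \int[pi a]_th f th)).
  by apply: eq_integral => a _; rewrite /= muleC.
rewrite -disintegration//; last by move=> a; rewrite lee_fin.
by apply: eq_integral => th _; rewrite /= muleC.
Qed.

Lemma measurable_fun_integral2_kernel d d' (X : measurableType d)
    (Y : measurableType d') (R : realType) (k : R.-spker X ~> Y)
    (G : Y * Y -> \bar R) : (forall z, 0 <= G z) -> measurable_fun [set: Y * Y] G ->
  measurable_fun [set: X] (fun x => \int[k x]_eta \int[k x]_th G (th, eta)).
Proof.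
move=> G0 mG.
apply: (measurable_fun_integral_finite_kernel
  (fun p : X * Y => \int[k p.1]_th G (th, p.2)) k).
  by move=> p; exact: integral_ge0.
have mGswap : measurable_fun [set: Y * Y] (fun p : Y * Y => G (p.2, p.1)).
  by apply: measurableT_comp mG _; exact: measurable_swap.
have := measurable_fun_integral_kernel_snd k (f := fun p : Y * Y => G (p.2, p.1)).
move=> /(_ (fun z => G0 _) mGswap) mGk.
exact: measurableT_comp mGk (@measurable_swap _ _ X Y).
Qed.

Lemma integral2_kernel_image d d' d'' (X : measurableType d)
    (T : measurableType d') (T' : measurableType d'') (R : realType)
    (M : {measure set X -> \bar R}) (q : R.-spker X ~> T) (p : R.-spker X ~> T')
    (t : T -> T') : measurable_fun [set: T] t ->
  {ae M, forall x A, measurable A -> p x A = q x (t @^-1` A)} ->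
  forall G, (forall z, 0 <= G z) -> measurable_fun [set: T' * T'] G ->
  \int[M]_x \int[p x]_b \int[p x]_a G (a, b) =
  \int[M]_x \int[q x]_eta \int[q x]_th G (t th, t eta).
Proof.
move=> mt pq G G0 mG.
have mGt : measurable_fun [set: T * T] (fun z => G (t z.1, t z.2)).
  apply: measurableT_comp mG _; apply/measurable_fun_pairP; split.
    exact: measurableT_comp mt measurable_fst.
  exact: measurableT_comp mt measurable_snd.
apply: ae_eq_integral => //.
- exact: measurable_fun_integral2_kernel.
- exact: (measurable_fun_integral2_kernel q (G := fun z => G (t z.1, t z.2))).
apply: filterS pq => x pqx _.
have mpG b : measurable_fun [set: T'] (fun a => G (a, b)).
  by apply: measurableT_comp mG _; exact: measurable_pair2.
rewrite (ge0_integral_image mt pqx (h := fun b => \int[p x]_a G (a, b))); last 2 first.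
- have := measurable_fun_integral_kernel_snd p (f := fun z : T' * T' => G (z.2, z.1)).
  move=> /(_ (fun z => G0 _)) mGp.
  apply: measurableT_comp (mGp _) (measurable_pair2 x).
  by apply: measurableT_comp mG _; exact: measurable_swap.
- by move=> b; exact: integral_ge0.
apply: eq_integral => eta _.
by rewrite (ge0_integral_image mt pqx (h := fun a => G (a, t eta))).
Qed.

Theorem theorem3p3 (R : realType)
  (dX : measure_display) (X : measurableType dX)
  (dT : measure_display) (Th : measurableType dT)
  (* P(dx | theta) : Markov kernel from Theta to X *)
  (P : R.-pker Th ~> X)
  (* nu : sigma-finite measure on Theta *)
  (nu : {measure set Th -> \bar R})
  (nu_sf : sigma_finite [set: Th] nu)
  (* M : the marginal, assumed sigma-finite *)
  (M : {measure set X -> \bar R})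
  (M_def : forall B, measurable B -> M B = \int[nu]_th P th B)
  (M_sf : sigma_finite [set: X] M)
  (* Q(dtheta | x) : Markov kernel with P(dx|th) nu(dth) = Q(dth|x) M(dx) *)
  (Q : R.-pker X ~> Th)
  (PQ : forall (A : set Th) (B : set X), measurable A -> measurable B ->
     \int[nu]_(th in A) P th B = \int[M]_(x in B) Q x A)
  (* R(C | eta) = \int_X Q(C | x) P(dx | eta) *)
  (Rk : R.-pker Th ~> Th)
  (Rk_def : forall eta C, measurable C -> Rk eta C = \int[P eta]_x Q x C)
  (* t : Theta -> [0, oo) measurable, s = nu o t^-1 on Borel sets *)
  (t : Th -> R) (t_ge0 : forall th, (0 <= t th)%R)
  (t_meas : measurable_fun [set: Th] t)
  (s : {measure set R -> \bar R})
  (s_def : forall A, measurable A -> s A = nu (t @^-1` A))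
  (* disjoint Borel A_i covering [0,oo) with 0 < s(A_i) < oo *)
  (Hpart : exists Ai : nat -> set R,
     (forall i, measurable (Ai i)) /\ trivIset [set: nat] Ai /\
     \bigcup_i Ai i = `[0%R, +oo[%classic /\
     (forall i, 0 < nu (t @^-1` Ai i) < +oo))
  (* pi(dtheta | a) : Markov kernel (disintegration of nu along t) *)
  (pi : R.-pker R ~> Th)
  (pi_dis : forall (f1 : Th -> \bar R) (f2 : R -> \bar R),
     (forall th, 0 <= f1 th) -> measurable_fun [set: Th] f1 ->
     (forall a, 0 <= f2 a) -> measurable_fun [set: R] f2 ->
     \int[nu]_th (f2 (t th) * f1 th) =
     \int[s]_(a in `[0%R, +oo[%classic) (f2 a * \int[pi a]_th f1 th))
  (* Ptilde(dx | a) = \int P(dx | theta) pi(dtheta | a) *)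
  (Pt : R.-pker R ~> X)
  (Pt_def : forall a B, measurable B -> Pt a B = \int[pi a]_th P th B)
  (* Qtilde(da | x) : Markov kernel into [0,oo) with
     Ptilde(dx|a) s(da) = Qtilde(da|x) M(dx) *)
  (Qt : R.-pker X ~> R)
  (Qt_supp : forall x, Qt x `[0%R, +oo[%classic = 1)
  (PQt : forall (A : set R) (B : set X), measurable A -> A `<=` `[0%R, +oo[%classic ->
     measurable B ->
     \int[s]_(a in A) Pt a B = \int[M]_(x in B) Qt x A)
  (* Rtilde(da | b) = \int Qtilde(da | x) Ptilde(dx | b) *)
  (Rt : R.-pker R ~> R)
  (Rt_def : forall b A, measurable A -> Rt b A = \int[Pt b]_x Qt x A)
  (ht : R -> R) (ht_L2 : L2fun (`[0%R, +oo[%classic : set R) s ht) :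
  L2fun [set: Th] nu (fun th => ht (t th)) /\
  dirichlet_form (`[0%R, +oo[%classic : set R) s Rt ht =
  dirichlet_form [set: Th] nu Rk (fun th => ht (t th)).
Proof.
set I := `[0%R, +oo[%classic : set R.
have mI : measurable I by exact: measurable_itv.
have tI th : I (t th) by rewrite /I /= in_itv /= t_ge0.
have s_conull : s (~` I) = 0 := image_measure_conull s_def mI tI.
have Qt_conull x : Qt x (~` I) = 0 by exact: prob_kernel_setC_eq0.
have Rt_conull b : Rt b (~` I) = 0.
  rewrite Rt_def; last exact: measurableC.
  by under eq_integral do rewrite Qt_conull; exact: integral0.
have PQt_all := kernel_inversion_conull mI s_conull Qt_conull PQt.
have s_sigma_finite : sigma_finite [set: R] s.
  case: Hpart => Ai [mAi [_ [covAi Aifin]]].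
  apply: (sigma_finite_conull_cover mI s_conull covAi) => n.
  by split => //; rewrite s_def//; case/andP: (Aifin n).
have Qt_image : {ae M, forall x A, measurable A -> Qt x A = Q x (t @^-1` A)}.
  apply: ae_eq_kernel_image => // A B mA mB.
  rewrite -PQt_all// -PQ//; last by rewrite -[X in measurable X]setTI; exact: t_meas.
  under eq_integral do rewrite Pt_def//.
  by apply: (setintegral_disintegration mI s_conull pi_dis) => //; exact: measurable_kernel.
have mg : measurable_fun [set: R] (ht \_ I).
  by apply/(measurable_restrictT _ mI); case: ht_L2.
have -> : (fun th => ht (t th)) = ht \_ I \o t.
  by apply/funext => th; rewrite /= patchE mem_set.
split; first exact: (L2fun_image t_meas s_def (L2fun_conull mI s_conull ht_L2)).
rewrite (dirichlet_form_conull mI s_conull Rt_conull (proj1 ht_L2)).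
rewrite (dirichlet_form_inversion s_sigma_finite PQt_all Rt_def mg).
rewrite (dirichlet_form_inversion nu_sf PQ Rk_def (measurableT_comp mg t_meas)).
congr (_ * _); apply: (integral2_kernel_image t_meas Qt_image
  (G := fun z => ((ht \_ I z.1 - ht \_ I z.2) ^+ 2)%:E)).
- by move=> z; rewrite lee_fin sqr_ge0.
- by apply/measurable_EFinP/measurable_funX/measurable_funB; exact: measurableT_comp.
Qed.
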